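(* On a dynamic surface $\Sigma_t$, the temporal curvature tensor $\dot R^\beta_{\ \alpha\gamma}=\partial_t\Gamma^\beta_{\alpha\gamma}+R^\beta_{\ \gamma\alpha\delta}V^\delta-\nabla_\alpha\dot\Gamma^\beta_\gamma$ satisfies $$\dot R^\beta_{\ \alpha\gamma}=\nabla^\beta\!\left(CB_{\alpha\gamma}\right)-\nabla_\gamma\!\left(CB^\beta_\alpha\right)=B_{\alpha\gamma}\nabla^\beta C-B^\beta_\alpha\nabla_\gamma C .$$ Consequently, for every smooth contravariant surface field $\psi^\beta$, $(\dot\nabla\nabla_\alpha-\nabla_\alpha\dot\nabla-CB^\gamma_\alpha\nabla_\gamma)\psi^\beta=(B_{\alpha\gamma}\nabla^\beta C-B^\beta_\alpha\nabla_\gamma C)\psi^\gamma$.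
   Context: Setting: $\Sigma_t$ is a smooth one-parameter family of 2-dimensional surfaces in Euclidean 3-space given by $\mathbf R(S^1,S^2,t)$ in surface coordinates $S^\alpha$; $\mathbf S_\alpha=\partial_\alpha\mathbf R$, metric $S_{\alpha\beta}=\mathbf S_\alpha\cdot\mathbf S_\beta$ with inverse $S^{\alpha\beta}$ (used to raise/lower indices), $\mathbf S^\alpha=S^{\alpha\beta}\mathbf S_\beta$, unit normal $\mathbf N$, Christoffel symbols $\Gamma^\gamma_{\alpha\beta}=\mathbf S^\gamma\cdot\partial_\alpha\mathbf S_\beta$, surface covariant derivative $\nabla_\alpha$, curvature tensor $B_{\alpha\beta}=\mathbf N\cdot\nabla_\alpha\mathbf S_\beta$. The Riemann tensor is defined by $(\nabla_\alpha\nabla_\beta-\nabla_\beta\nabla_\alpha)\psi^\gamma=R^\gamma_{\ \delta\alpha\beta}\psi^\delta$. Velocity $\mathbf V=\partial_t\mathbf R$ at fixed $S^\alpha$, $C=\mathbf V\cdot\mathbf N$, $V^\alpha=\mathbf V\cdot\mathbf S^\alpha$. Christoffel time symbol $\dot\Gamma^\alpha_\beta=\nabla_\beta V^\alpha-CB^\alpha_\beta$. Invariant time derivative: $\dot\nabla\psi=\partial_t\psi-V^\alpha\nabla_\alpha\psi$ on scalars, $\dot\nabla\psi^\alpha=\partial_t\psi^\alpha-V^\gamma\nabla_\gamma\psi^\alpha+\dot\Gamma^\alpha_\gamma\psi^\gamma$, $\dot\nabla\psi_\alpha=\partial_t\psi_\alpha-V^\gamma\nabla_\gamma\psi_\alpha-\dot\Gamma^\gamma_\alpha\psi_\gamma$,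 one term per index for higher rank. *)

From Stdlib Require Import Reals ClassicalEpsilon.
Open Scope R_scope.

(** Scalar fields of (S^1, S^2, t). *)
Definition field := R -> R -> R -> R.

(** Direction k: 0 -> S^1, 1 -> S^2, otherwise (2) -> t. *)
Definition dir (k : nat) (f : field) (s1 s2 t : R) : R -> R :=
  match k with
  | O => fun x => f x s2 t
  | S O => fun x => f s1 x t
  | _ => fun x => f s1 s2 x
  end.
Definition coord (k : nat) (s1 s2 t : R) : R :=
  match k with O => s1 | S O => s2 | _ => t end.

Definition pd (k : nat) (f : field) : field := fun s1 s2 t =>
  epsilon (inhabits 0) (fun l => derivable_pt_lim (dir k f s1 s2 t) (coord k s1 s2 t) l).

Fixpoint pds (l : list nat) (f : field) : field :=
  match l with nil => f | cons k l' => pd k (pds l' f) end.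

Definition open3 (U : R -> R -> R -> Prop) : Prop :=
  forall s1 s2 t, U s1 s2 t -> exists d, 0 < d /\
    forall a b c, Rabs (a - s1) < d -> Rabs (b - s2) < d -> Rabs (c - t) < d -> U a b c.

Definition cont3_at (f : field) (s1 s2 t : R) : Prop :=
  forall eps, 0 < eps -> exists d, 0 < d /\
    forall a b c, Rabs (a - s1) < d -> Rabs (b - s2) < d -> Rabs (c - t) < d ->
      Rabs (f a b c - f s1 s2 t) < eps.

Definition smooth_on (U : R -> R -> R -> Prop) (f : field) : Prop :=
  forall (l : list nat) s1 s2 t, U s1 s2 t ->
    cont3_at (pds l f) s1 s2 t /\
    forall k, exists d, derivable_pt_lim (dir k (pds l f) s1 s2 t) (coord k s1 s2 t) d.

(** Index sums over {1,2} (encoded 0,1) and over the three Cartesian components. *)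
Definition sum2 (F : nat -> field) : field := fun s1 s2 t => F O s1 s2 t + F (S O) s1 s2 t.
Definition dot3 (u v : nat -> field) : field := fun s1 s2 t =>
  u O s1 s2 t * v O s1 s2 t + u (S O) s1 s2 t * v (S O) s1 s2 t
  + u (S (S O)) s1 s2 t * v (S (S O)) s1 s2 t.
Definition cross (u v : nat -> field) (i : nat) : field := fun s1 s2 t =>
  match i with
  | O => u (S O) s1 s2 t * v (S (S O)) s1 s2 t - u (S (S O)) s1 s2 t * v (S O) s1 s2 t
  | S O => u (S (S O)) s1 s2 t * v O s1 s2 t - u O s1 s2 t * v (S (S O)) s1 s2 t
  | _ => u O s1 s2 t * v (S O) s1 s2 t - u (S O) s1 s2 t * v O s1 s2 t
  end.

Section Geometry.
(** X i = i-th Cartesian component of the position vector R(S^1,S^2,t). *)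
Variable X : nat -> field.

Definition Sv (a i : nat) : field := pd a (X i).
Definition gcov (a b : nat) : field := dot3 (Sv a) (Sv b).
Definition gdet : field := fun s1 s2 t =>
  gcov O O s1 s2 t * gcov (S O) (S O) s1 s2 t - gcov O (S O) s1 s2 t * gcov (S O) O s1 s2 t.
Definition gcon (a b : nat) : field := fun s1 s2 t =>
  match a, b with
  | O, O => gcov (S O) (S O) s1 s2 t / gdet s1 s2 t
  | S O, S O => gcov O O s1 s2 t / gdet s1 s2 t
  | _, _ => - gcov a b s1 s2 t / gdet s1 s2 t
  end.
Definition Sup (a i : nat) : field :=
  sum2 (fun b s1 s2 t => gcon a b s1 s2 t * Sv b i s1 s2 t).
Definition Nrm (i : nat) : field := fun s1 s2 t =>
  cross (Sv O) (Sv (S O)) i s1 s2 t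
  / sqrt (dot3 (cross (Sv O) (Sv (S O))) (cross (Sv O) (Sv (S O))) s1 s2 t).
Definition Gam (c a b : nat) : field :=
  dot3 (Sup c) (fun i => pd a (Sv b i)).
Definition covS (a b i : nat) : field := fun s1 s2 t =>
  pd a (Sv b i) s1 s2 t - sum2 (fun c s1 s2 t => Gam c a b s1 s2 t * Sv c i s1 s2 t) s1 s2 t.
Definition Bcov (a b : nat) : field := dot3 Nrm (covS a b).
Definition Bmix (b a : nat) : field :=
  sum2 (fun d s1 s2 t => gcon b d s1 s2 t * Bcov d a s1 s2 t).
Definition Vel (i : nat) : field := pd 2 (X i).
Definition Cn : field := dot3 Vel Nrm.
Definition Vup (a : nat) : field := dot3 Vel (Sup a).

(** Covariant derivatives; u b = u^b, T a c = T_{ac}, M b a = M^b_a. *)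
Definition nab_v (a : nat) (u : nat -> field) (b : nat) : field := fun s1 s2 t =>
  pd a (u b) s1 s2 t + sum2 (fun d s1 s2 t => Gam b a d s1 s2 t * u d s1 s2 t) s1 s2 t.
Definition nab_up_s (b : nat) (f : field) : field :=
  sum2 (fun d s1 s2 t => gcon b d s1 s2 t * pd d f s1 s2 t).
Definition nab_cov2 (d : nat) (T : nat -> nat -> field) (a c : nat) : field := fun s1 s2 t =>
  pd d (T a c) s1 s2 t
  - sum2 (fun w s1 s2 t => Gam w d a s1 s2 t * T w c s1 s2 t) s1 s2 t
  - sum2 (fun w s1 s2 t => Gam w d c s1 s2 t * T a w s1 s2 t) s1 s2 t.
Definition nab_up_cov2 (b : nat) (T : nat -> nat -> field) (a c : nat) : field :=
  sum2 (fun d s1 s2 t => gcon b d s1 s2 t * nab_cov2 d T a c s1 s2 t).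
Definition nab_mix (d : nat) (M : nat -> nat -> field) (b a : nat) : field := fun s1 s2 t =>
  pd d (M b a) s1 s2 t
  + sum2 (fun w s1 s2 t => Gam b d w s1 s2 t * M w a s1 s2 t) s1 s2 t
  - sum2 (fun w s1 s2 t => Gam w d a s1 s2 t * M b w s1 s2 t) s1 s2 t.

(** Riemann tensor R^g_{d a b}, the coordinate expression of
    (nabla_a nabla_b - nabla_b nabla_a) psi^g = R^g_{d a b} psi^d. *)
Definition Riem (g d a b : nat) : field := fun s1 s2 t =>
  pd a (Gam g b d) s1 s2 t - pd b (Gam g a d) s1 s2 t
  + sum2 (fun w s1 s2 t => Gam g a w s1 s2 t * Gam w b d s1 s2 t) s1 s2 t
  - sum2 (fun w s1 s2 t => Gam g b w s1 s2 t * Gam w a d s1 s2 t) s1 s2 t.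

Definition Gdot (b c : nat) : field := fun s1 s2 t =>
  nab_v c Vup b s1 s2 t - Cn s1 s2 t * Bmix b c s1 s2 t.

Definition Rdot (b a c : nat) : field := fun s1 s2 t =>
  pd 2 (Gam b a c) s1 s2 t
  + sum2 (fun d s1 s2 t => Riem b c a d s1 s2 t * Vup d s1 s2 t) s1 s2 t
  - nab_mix a Gdot b c s1 s2 t.

Definition tdv (u : nat -> field) (b : nat) : field := fun s1 s2 t =>
  pd 2 (u b) s1 s2 t
  - sum2 (fun g s1 s2 t => Vup g s1 s2 t * nab_v g u b s1 s2 t) s1 s2 t
  + sum2 (fun g s1 s2 t => Gdot b g s1 s2 t * u g s1 s2 t) s1 s2 t.
Definition tdmix (M : nat -> nat -> field) (b a : nat) : field := fun s1 s2 t =>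
  pd 2 (M b a) s1 s2 t
  - sum2 (fun g s1 s2 t => Vup g s1 s2 t * nab_mix g M b a s1 s2 t) s1 s2 t
  + sum2 (fun g s1 s2 t => Gdot b g s1 s2 t * M g a s1 s2 t) s1 s2 t
  - sum2 (fun g s1 s2 t => Gdot g a s1 s2 t * M b g s1 s2 t) s1 s2 t.

End Geometry.

(* Treat t as a third coordinate next to S^1, S^2. The frame (S_1, S_2, N) and its dual
   (S^1, S^2, N) decompose every vector, so differentiating the relations S^a.S_b = delta,
   N.S_b = 0 and N.N = 1 gives the Gauss-Weingarten formulas for d_k S^b and d_k N, also for
   k = t. With them the Christoffel time symbol turns out to be S^b.d_t S_c, the mixed Christoffel
   symbol of the coordinates (S^1, S^2, t); expanding Rdot accordingly, every third derivative of
   the position vector cancels by the symmetry of mixed partials (Schwarz), and what is left is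
   B_ac nabla^b C - B^b_a nabla_c C. The first form follows by the product rule, the remaining
   Codazzi terms again cancelling by symmetry of third derivatives. The commutator identity is a
   formal expansion in which only the symmetry of the Christoffel symbols and of the second
   derivatives of psi is used; it leaves exactly Rdot^b_ac psi^c. *)

From Stdlib Require Import Reals Lra Lia ClassicalEpsilon FunctionalExtensionality PropExtensionality.
From Coquelicot Require Import Coquelicot.
Open Scope R_scope.

Definition is_pd k (f : field) s1 s2 t l : Prop :=
  derivable_pt_lim (dir k f s1 s2 t) (coord k s1 s2 t) l.
Definition ex_pd k (f : field) s1 s2 t : Prop := exists l, is_pd k f s1 s2 t l.

Lemma is_pd_unique k f s1 s2 t l : is_pd k f s1 s2 t l -> pd k f s1 s2 t = l.
Proof.
  intros H. apply (uniqueness_limite _ _ _ _ (epsilon_spec (inhabits 0) _ (ex_intro _ l H)) H).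
Qed.

Lemma pd_correct k f s1 s2 t : ex_pd k f s1 s2 t -> is_pd k f s1 s2 t (pd k f s1 s2 t).
Proof. intros [l H]. rewrite (is_pd_unique _ _ _ _ _ _ H). exact H. Qed.

Lemma dir_coord k f s1 s2 t : dir k f s1 s2 t (coord k s1 s2 t) = f s1 s2 t.
Proof. destruct k as [|[|k]]; reflexivity. Qed.

Lemma dir_map1 k (h : R -> R) f s1 s2 t :
  dir k (fun a b c => h (f a b c)) s1 s2 t = fun x => h (dir k f s1 s2 t x).
Proof. destruct k as [|[|k]]; reflexivity. Qed.

Lemma dir_map2 k (h : R -> R -> R) f g s1 s2 t :
  dir k (fun a b c => h (f a b c) (g a b c)) s1 s2 t
  = fun x => h (dir k f s1 s2 t x) (dir k g s1 s2 t x).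
Proof. destruct k as [|[|k]]; reflexivity. Qed.

Lemma is_pd_const k r s1 s2 t : is_pd k (fun _ _ _ => r) s1 s2 t 0.
Proof.
  unfold is_pd. replace (dir k _ s1 s2 t) with (fct_cte r) by (destruct k as [|[|k]]; reflexivity).
  apply derivable_pt_lim_const.
Qed.

Section PartialDerivativeRules.
Variables (k : nat) (f g : field) (s1 s2 t : R).

Lemma is_pd_opp l : is_pd k f s1 s2 t l -> is_pd k (fun a b c => - f a b c) s1 s2 t (- l).
Proof. unfold is_pd. rewrite (dir_map1 k Ropp). exact (derivable_pt_lim_opp _ _ _). Qed.

Lemma is_pd_plus l1 l2 : is_pd k f s1 s2 t l1 -> is_pd k g s1 s2 t l2 ->
  is_pd k (fun a b c => f a b c + g a b c) s1 s2 t (l1 + l2).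
Proof. unfold is_pd. rewrite (dir_map2 k Rplus). exact (derivable_pt_lim_plus _ _ _ _ _). Qed.

Lemma is_pd_minus l1 l2 : is_pd k f s1 s2 t l1 -> is_pd k g s1 s2 t l2 ->
  is_pd k (fun a b c => f a b c - g a b c) s1 s2 t (l1 - l2).
Proof. unfold is_pd. rewrite (dir_map2 k Rminus). exact (derivable_pt_lim_minus _ _ _ _ _). Qed.

Lemma is_pd_mult l1 l2 : is_pd k f s1 s2 t l1 -> is_pd k g s1 s2 t l2 ->
  is_pd k (fun a b c => f a b c * g a b c) s1 s2 t (l1 * g s1 s2 t + f s1 s2 t * l2).
Proof.
  unfold is_pd. rewrite (dir_map2 k Rmult), <- (dir_coord k f), <- (dir_coord k g).
  exact (derivable_pt_lim_mult _ _ _ _ _).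
Qed.

Lemma is_pd_div l1 l2 : is_pd k f s1 s2 t l1 -> is_pd k g s1 s2 t l2 -> g s1 s2 t <> 0 ->
  is_pd k (fun a b c => f a b c / g a b c) s1 s2 t
    ((l1 * g s1 s2 t - l2 * f s1 s2 t) / (g s1 s2 t)²).
Proof.
  unfold is_pd. rewrite (dir_map2 k Rdiv), <- (dir_coord k f), <- (dir_coord k g).
  exact (derivable_pt_lim_div _ _ _ _ _).
Qed.

Lemma is_pd_sqrt l : is_pd k f s1 s2 t l -> 0 < f s1 s2 t ->
  is_pd k (fun a b c => sqrt (f a b c)) s1 s2 t (/ (2 * sqrt (f s1 s2 t)) * l).
Proof.
  unfold is_pd. rewrite (dir_map1 k sqrt), <- (dir_coord k f). intros Hf Hpos.
  exact (derivable_pt_lim_comp _ sqrt _ _ _ Hf (derivable_pt_lim_sqrt _ Hpos)).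
Qed.

Lemma ex_pd_opp : ex_pd k f s1 s2 t -> ex_pd k (fun a b c => - f a b c) s1 s2 t.
Proof. intros [l H]. eexists. exact (is_pd_opp _ H). Qed.

Lemma ex_pd_plus : ex_pd k f s1 s2 t -> ex_pd k g s1 s2 t ->
  ex_pd k (fun a b c => f a b c + g a b c) s1 s2 t.
Proof. intros [l1 H1] [l2 H2]. eexists. exact (is_pd_plus _ _ H1 H2). Qed.

Lemma ex_pd_minus : ex_pd k f s1 s2 t -> ex_pd k g s1 s2 t ->
  ex_pd k (fun a b c => f a b c - g a b c) s1 s2 t.
Proof. intros [l1 H1] [l2 H2]. eexists. exact (is_pd_minus _ _ H1 H2). Qed.

Lemma ex_pd_mult : ex_pd k f s1 s2 t -> ex_pd k g s1 s2 t ->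
  ex_pd k (fun a b c => f a b c * g a b c) s1 s2 t.
Proof. intros [l1 H1] [l2 H2]. eexists. exact (is_pd_mult _ _ H1 H2). Qed.

Lemma ex_pd_div : ex_pd k f s1 s2 t -> ex_pd k g s1 s2 t -> g s1 s2 t <> 0 ->
  ex_pd k (fun a b c => f a b c / g a b c) s1 s2 t.
Proof. intros [l1 H1] [l2 H2] Hg. eexists. exact (is_pd_div _ _ H1 H2 Hg). Qed.

Lemma ex_pd_sqrt : ex_pd k f s1 s2 t -> 0 < f s1 s2 t ->
  ex_pd k (fun a b c => sqrt (f a b c)) s1 s2 t.
Proof. intros [l H] Hf. eexists. exact (is_pd_sqrt _ H Hf). Qed.

Lemma pd_plus : ex_pd k f s1 s2 t -> ex_pd k g s1 s2 t ->
  pd k (fun a b c => f a b c + g a b c) s1 s2 t = pd k f s1 s2 t + pd k g s1 s2 t.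
Proof. intros Hf Hg. apply is_pd_unique, is_pd_plus; apply pd_correct; assumption. Qed.

Lemma pd_minus : ex_pd k f s1 s2 t -> ex_pd k g s1 s2 t ->
  pd k (fun a b c => f a b c - g a b c) s1 s2 t = pd k f s1 s2 t - pd k g s1 s2 t.
Proof. intros Hf Hg. apply is_pd_unique, is_pd_minus; apply pd_correct; assumption. Qed.

Lemma pd_mult : ex_pd k f s1 s2 t -> ex_pd k g s1 s2 t ->
  pd k (fun a b c => f a b c * g a b c) s1 s2 t
  = pd k f s1 s2 t * g s1 s2 t + f s1 s2 t * pd k g s1 s2 t.
Proof. intros Hf Hg. apply is_pd_unique, is_pd_mult; apply pd_correct; assumption. Qed.

End PartialDerivativeRules.

Lemma ex_pd_sum2 k F s1 s2 t : ex_pd k (F 0%nat) s1 s2 t -> ex_pd k (F 1%nat) s1 s2 t ->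
  ex_pd k (sum2 F) s1 s2 t.
Proof. apply ex_pd_plus. Qed.

Lemma pd_sum2 k F s1 s2 t : ex_pd k (F 0%nat) s1 s2 t -> ex_pd k (F 1%nat) s1 s2 t ->
  pd k (sum2 F) s1 s2 t = pd k (F 0%nat) s1 s2 t + pd k (F 1%nat) s1 s2 t.
Proof. apply pd_plus. Qed.

Lemma ex_pd_dot3 k u v s1 s2 t :
  (forall i, (i < 3)%nat -> ex_pd k (u i) s1 s2 t) -> (forall i, (i < 3)%nat -> ex_pd k (v i) s1 s2 t) ->
  ex_pd k (dot3 u v) s1 s2 t.
Proof.
  intros Hu Hv. unfold dot3. repeat apply ex_pd_plus; apply ex_pd_mult; (apply Hu || apply Hv); lia.
Qed.

Lemma pd_dot3 k u v s1 s2 t :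
  (forall i, (i < 3)%nat -> ex_pd k (u i) s1 s2 t) -> (forall i, (i < 3)%nat -> ex_pd k (v i) s1 s2 t) ->
  pd k (dot3 u v) s1 s2 t
  = dot3 (fun i => pd k (u i)) v s1 s2 t + dot3 u (fun i => pd k (v i)) s1 s2 t.
Proof.
  intros Hu Hv. unfold dot3.
  assert (Huv : forall i, (i < 3)%nat -> ex_pd k (fun a b c => u i a b c * v i a b c) s1 s2 t)
    by (intros; apply ex_pd_mult; auto).
  rewrite !pd_plus by (try apply ex_pd_plus; apply Huv; lia).
  rewrite !pd_mult by (apply Hu || apply Hv; lia). ring.
Qed.

Lemma Rabs_diag_lt e x : 0 < e -> Rabs (x - x) < e.
Proof. intros He. rewrite Rminus_diag, Rabs_R0. exact He. Qed.

Section Locality.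
Variables (U : R -> R -> R -> Prop) (k : nat) (f g : field) (s1 s2 t : R).
Hypotheses (HU : open3 U) (Hp : U s1 s2 t) (Hfg : forall a b c, U a b c -> f a b c = g a b c).

Lemma is_pd_ext_on l : is_pd k f s1 s2 t l -> is_pd k g s1 s2 t l.
Proof.
  unfold is_pd. rewrite <- !is_derive_Reals. apply is_derive_ext_loc.
  destruct (HU _ _ _ Hp) as [d [Hd Hball]].
  exists (mkposreal d Hd). intros x Hx. change (Rabs (x - coord k s1 s2 t) < d) in Hx.
  destruct k as [|[|k']]; simpl in *; apply Hfg, Hball; auto using Rabs_diag_lt.
Qed.

Lemma ex_pd_ext_on : ex_pd k f s1 s2 t -> ex_pd k g s1 s2 t.
Proof. intros [l H]. exists l. exact (is_pd_ext_on _ H). Qed.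

End Locality.

Lemma pd_ext_on U k f g s1 s2 t : open3 U -> U s1 s2 t ->
  (forall a b c, U a b c -> f a b c = g a b c) -> pd k f s1 s2 t = pd k g s1 s2 t.
Proof.
  intros HU Hp Hfg. unfold pd. f_equal.
  apply functional_extensionality; intro l. apply propositional_extensionality.
  split; apply (is_pd_ext_on U); auto. intros; symmetry; auto.
Qed.

Lemma pd_const_on U k f r s1 s2 t : open3 U -> U s1 s2 t ->
  (forall a b c, U a b c -> f a b c = r) -> pd k f s1 s2 t = 0.
Proof.
  intros HU Hp Hf. rewrite (pd_ext_on U k f (fun _ _ _ => r)) by auto.
  apply is_pd_unique, is_pd_const.
Qed.

Lemma smooth_on_pd U F k : smooth_on U F -> smooth_on U (pd k F).
Proof.
  intros HF l. replace (pds l (pd k F)) with (pds (l ++ k :: nil) F); [apply HF|].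
  induction l as [|m l IH]; simpl; congruence.
Qed.

Lemma smooth_ex_pd U F l k s1 s2 t : smooth_on U F -> U s1 s2 t -> ex_pd k (pds l F) s1 s2 t.
Proof. intros HF Hp. apply (HF l s1 s2 t Hp). Qed.

Lemma locally_2d_mono (P Q : R -> R -> Prop) x y :
  (forall u v, P u v -> Q u v) -> locally_2d P x y -> locally_2d Q x y.
Proof. intros H. apply locally_2d_impl, locally_2d_forall. exact H. Qed.

Lemma locally_2d_open P x y : locally_2d P x y -> locally_2d (locally_2d P) x y.
Proof.
  intros H. apply (locally_2d_mono _ _ _ _) with (2 := locally_2d_1d _ _ _ H).
  intros u v Hline. specialize (Hline 1 ltac:(lra)).
  replace u with (x + 1 * (u - x)) by ring. replace v with (y + 1 * (v - y)) by ring.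
  exact Hline.
Qed.

Lemma schwarz_lim (f f1 f2 f12 f21 : R -> R -> R) x y :
  locally_2d (fun u v =>
     derivable_pt_lim (fun z => f z v) u (f1 u v) /\
     derivable_pt_lim (fun w => f u w) v (f2 u v) /\
     derivable_pt_lim (fun z => f2 z v) u (f21 u v) /\
     derivable_pt_lim (fun w => f1 u w) v (f12 u v)) x y ->
  continuity_2d_pt f21 x y -> continuity_2d_pt f12 x y ->
  f21 x y = f12 x y.
Proof.
  intros Hd C21 C12.
  assert (D : locally_2d (fun u v =>
     is_derive (fun z => Derive (fun w => f z w) v) u (f21 u v) /\
     is_derive (fun w => Derive (fun z => f z w) u) v (f12 u v)) x y).
  { apply (locally_2d_mono _ _ _ _) with (2 := locally_2d_open _ _ _ Hd).
    intros u v Huv. split.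
    - apply (is_derive_ext_loc (fun z => f2 z v)).
      + eapply filter_imp; [|exact (locally_2d_1d_const_y _ _ _ Huv)].
        intros z [_ [Hz _]]. symmetry. apply is_derive_unique, is_derive_Reals, Hz.
      + apply is_derive_Reals, (locally_2d_singleton _ _ _ Huv).
    - apply (is_derive_ext_loc (fun w => f1 u w)).
      + eapply filter_imp; [|exact (locally_2d_1d_const_x _ _ _ Huv)].
        intros w [Hw _]. symmetry. apply is_derive_unique, is_derive_Reals, Hw.
      + apply is_derive_Reals, (locally_2d_singleton _ _ _ Huv). }
  assert (E : locally_2d (fun u v =>
     f21 u v = Derive (fun z => Derive (fun w => f z w) v) u /\
     f12 u v = Derive (fun w => Derive (fun z => f z w) u) v) x y).
  { apply (locally_2d_mono _ _ _ _) with (2 := D).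
    intros u v [H21 H12]. split; symmetry; apply is_derive_unique; assumption. }
  destruct (locally_2d_singleton _ _ _ E) as [-> ->].
  apply Schwarz.
  - apply (locally_2d_mono _ _ _ _) with (2 := locally_2d_and _ _ _ _ Hd D).
    intros u v [[H1 [H2 _]] [H21 H12]].
    repeat split; eexists; try eassumption; apply is_derive_Reals; eassumption.
  - apply (continuity_2d_pt_ext_loc f21); [|exact C21].
    apply (locally_2d_mono _ _ _ _) with (2 := E). tauto.
  - apply (continuity_2d_pt_ext_loc f12); [|exact C12].
    apply (locally_2d_mono _ _ _ _) with (2 := E). tauto.
Qed.

Section SchwarzOnPlane.
(* [p1 u v, p2 u v, p3 u v] parameterises the coordinate plane through [p x y] in which
   coordinate [j] equals [u] and coordinate [k] equals [v]. *)
Variables (U : R -> R -> R -> Prop) (F : field) (j k : nat) (p1 p2 p3 : R -> R -> R) (x y : R).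
Hypotheses (HU : open3 U) (HF : smooth_on U F) (Hxy : U (p1 x y) (p2 x y) (p3 x y)).
Hypothesis dir_j : forall G u v,
  dir j G (p1 u v) (p2 u v) (p3 u v) = fun z => G (p1 z v) (p2 z v) (p3 z v).
Hypothesis dir_k : forall G u v,
  dir k G (p1 u v) (p2 u v) (p3 u v) = fun w => G (p1 u w) (p2 u w) (p3 u w).
Hypothesis coord_j : forall u v, coord j (p1 u v) (p2 u v) (p3 u v) = u.
Hypothesis coord_k : forall u v, coord k (p1 u v) (p2 u v) (p3 u v) = v.
Hypothesis plane_near : forall e u v, 0 < e -> Rabs (u - x) < e -> Rabs (v - y) < e ->
  Rabs (p1 u v - p1 x y) < e /\ Rabs (p2 u v - p2 x y) < e /\ Rabs (p3 u v - p3 x y) < e.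

Let slice (G : field) u v := G (p1 u v) (p2 u v) (p3 u v).

Let slice_in_U : locally_2d (fun u v => U (p1 u v) (p2 u v) (p3 u v)) x y.
Proof.
  destruct (HU _ _ _ Hxy) as [d [Hd Hball]]. exists (mkposreal d Hd). intros u v Hu Hv.
  destruct (plane_near d u v Hd Hu Hv) as [H1 [H2 H3]]. apply Hball; assumption.
Qed.

Let slice_pd l u v : U (p1 u v) (p2 u v) (p3 u v) ->
  derivable_pt_lim (fun z => slice (pds l F) z v) u (slice (pd j (pds l F)) u v) /\
  derivable_pt_lim (fun w => slice (pds l F) u w) v (slice (pd k (pds l F)) u v).
Proof.
  intros Huv. unfold slice.
  pose proof (pd_correct _ _ _ _ _ (smooth_ex_pd U F l j _ _ _ HF Huv)) as Hj.
  pose proof (pd_correct _ _ _ _ _ (smooth_ex_pd U F l k _ _ _ HF Huv)) as Hk.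
  unfold is_pd in Hj, Hk. rewrite dir_j, coord_j in Hj. rewrite dir_k, coord_k in Hk.
  split; assumption.
Qed.

Let slice_continuous l : continuity_2d_pt (slice (pds l F)) x y.
Proof.
  intros eps. destruct (proj1 (HF l _ _ _ Hxy) eps (cond_pos eps)) as [d [Hd Hcont]].
  exists (mkposreal d Hd). intros u v Hu Hv.
  destruct (plane_near d u v Hd Hu Hv) as [H1 [H2 H3]]. apply Hcont; assumption.
Qed.

Lemma pd_comm_on_plane :
  pd j (pd k F) (p1 x y) (p2 x y) (p3 x y) = pd k (pd j F) (p1 x y) (p2 x y) (p3 x y).
Proof.
  apply (schwarz_lim (slice F) (slice (pd j F)) (slice (pd k F))
           (slice (pd k (pd j F))) (slice (pd j (pd k F)))).
  - apply (locally_2d_mono _ _ _ _) with (2 := slice_in_U). intros u v Huv.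
    destruct (slice_pd nil u v Huv) as [H1 H2].
    destruct (slice_pd (k :: nil) u v Huv) as [H21 _].
    destruct (slice_pd (j :: nil) u v Huv) as [_ H12].
    repeat split; assumption.
  - apply (slice_continuous (j :: k :: nil)).
  - apply (slice_continuous (k :: j :: nil)).
Qed.

End SchwarzOnPlane.

Lemma pd_comm U F j k s1 s2 t : (j < 3)%nat -> (k < 3)%nat -> open3 U -> smooth_on U F -> U s1 s2 t ->
  pd j (pd k F) s1 s2 t = pd k (pd j F) s1 s2 t.
Proof.
  intros Hj Hk HU HF Hp.
  assert (Hlt : forall j k, (j < k < 3)%nat -> pd j (pd k F) s1 s2 t = pd k (pd j F) s1 s2 t).
  { clear j k Hj Hk. intros j k Hjk.
    destruct j as [|[|j]], k as [|[|[|k]]]; try lia.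
    - exact (pd_comm_on_plane U F 0 1 (fun u _ => u) (fun _ v => v) (fun _ _ => t) s1 s2
        HU HF Hp (fun _ _ _ => eq_refl) (fun _ _ _ => eq_refl) (fun _ _ => eq_refl) (fun _ _ => eq_refl)
        (fun e _ _ He Hu Hv => conj Hu (conj Hv (Rabs_diag_lt e t He)))).
    - exact (pd_comm_on_plane U F 0 2 (fun u _ => u) (fun _ _ => s2) (fun _ v => v) s1 t
        HU HF Hp (fun _ _ _ => eq_refl) (fun _ _ _ => eq_refl) (fun _ _ => eq_refl) (fun _ _ => eq_refl)
        (fun e _ _ He Hu Hv => conj Hu (conj (Rabs_diag_lt e s2 He) Hv))).
    - exact (pd_comm_on_plane U F 1 2 (fun _ _ => s1) (fun u _ => u) (fun _ v => v) s2 t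
        HU HF Hp (fun _ _ _ => eq_refl) (fun _ _ _ => eq_refl) (fun _ _ => eq_refl) (fun _ _ => eq_refl)
        (fun e _ _ He Hu Hv => conj (Rabs_diag_lt e s1 He) (conj Hu Hv))). }
  destruct (Nat.lt_total j k) as [Hjk | [<- | Hkj]].
  - apply Hlt. lia.
  - reflexivity.
  - symmetry. apply Hlt. lia.
Qed.

Section Frame.
Variables (U : R -> R -> R -> Prop) (X : nat -> field).
Hypothesis HU : open3 U.
Hypothesis HX : forall i, (i < 3)%nat -> smooth_on U (X i).
Hypothesis Hnd : forall s1 s2 t, U s1 s2 t ->
  dot3 (cross (Sv X 0) (Sv X 1)) (cross (Sv X 0) (Sv X 1)) s1 s2 t <> 0.

Local Notation nS := (cross (Sv X 0) (Sv X 1)).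

Lemma ex_pd_Sv a i k s1 s2 t : (i < 3)%nat -> U s1 s2 t -> ex_pd k (Sv X a i) s1 s2 t.
Proof. intros. apply (smooth_ex_pd U (X i) (a :: nil)); auto. Qed.

Lemma ex_pd_pd_Sv a c i k s1 s2 t : (i < 3)%nat -> U s1 s2 t -> ex_pd k (pd a (Sv X c i)) s1 s2 t.
Proof. intros. apply (smooth_ex_pd U (X i) (a :: c :: nil)); auto. Qed.

Lemma ex_pd_Vel i k s1 s2 t : (i < 3)%nat -> U s1 s2 t -> ex_pd k (Vel X i) s1 s2 t.
Proof. intros. apply (smooth_ex_pd U (X i) (2%nat :: nil)); auto. Qed.

Lemma gdet_eq_cross s1 s2 t : gdet X s1 s2 t = dot3 nS nS s1 s2 t.
Proof. unfold gdet, gcov, dot3, cross. ring. Qed.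

Lemma gdet_pos s1 s2 t : U s1 s2 t -> 0 < gdet X s1 s2 t.
Proof.
  intros Hp. pose proof (Hnd s1 s2 t Hp) as H. rewrite gdet_eq_cross.
  assert (0 <= dot3 nS nS s1 s2 t) by (unfold dot3; nra). lra.
Qed.

Lemma gdet_neq0 s1 s2 t : U s1 s2 t -> gdet X s1 s2 t <> 0.
Proof. intros Hp. apply Rgt_not_eq, gdet_pos, Hp. Qed.

Lemma sqrt_gdet_neq0 s1 s2 t : U s1 s2 t -> sqrt (gdet X s1 s2 t) <> 0.
Proof. intros Hp. apply Rgt_not_eq, sqrt_lt_R0, gdet_pos, Hp. Qed.

Lemma Nrm_eq i s1 s2 t : Nrm X i s1 s2 t = nS i s1 s2 t / sqrt (gdet X s1 s2 t).
Proof. unfold Nrm. rewrite gdet_eq_cross. reflexivity. Qed.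

Lemma Nrm_mul_Nrm i j s1 s2 t : U s1 s2 t ->
  Nrm X i s1 s2 t * Nrm X j s1 s2 t = nS i s1 s2 t * nS j s1 s2 t / gdet X s1 s2 t.
Proof.
  intros Hp. rewrite !Nrm_eq. pose proof (sqrt_gdet_neq0 _ _ _ Hp).
  rewrite <- (sqrt_sqrt (gdet X s1 s2 t)) at 3 by (apply Rlt_le, gdet_pos, Hp).
  field. assumption.
Qed.

Lemma ex_pd_gcov a b k s1 s2 t : U s1 s2 t -> ex_pd k (gcov X a b) s1 s2 t.
Proof. intros. apply ex_pd_dot3; intros; apply ex_pd_Sv; auto. Qed.

Lemma ex_pd_gcon a b k s1 s2 t : (a < 2)%nat -> (b < 2)%nat -> U s1 s2 t -> ex_pd k (gcon X a b) s1 s2 t.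
Proof.
  intros Ha Hb Hp. assert (Hdet : ex_pd k (gdet X) s1 s2 t)
    by (apply ex_pd_minus; apply ex_pd_mult; apply ex_pd_gcov; assumption).
  destruct a as [|[|a]], b as [|[|b]]; try lia; unfold gcon;
    apply ex_pd_div; try apply ex_pd_opp; auto using ex_pd_gcov, gdet_neq0.
Qed.

Lemma ex_pd_Sup a i k s1 s2 t : (a < 2)%nat -> (i < 3)%nat -> U s1 s2 t -> ex_pd k (Sup X a i) s1 s2 t.
Proof.
  intros. apply ex_pd_sum2; apply ex_pd_mult; (apply ex_pd_gcon || apply ex_pd_Sv); auto; lia.
Qed.

Lemma ex_pd_Nrm i k s1 s2 t : U s1 s2 t -> ex_pd k (Nrm X i) s1 s2 t.
Proof.
  intros Hp. assert (HnS : forall i, ex_pd k (nS i) s1 s2 t)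
    by (intros [|[|?]]; apply ex_pd_minus; apply ex_pd_mult; apply ex_pd_Sv; auto).
  apply ex_pd_div; auto.
  - apply ex_pd_sqrt; [apply ex_pd_dot3; auto|]. rewrite <- gdet_eq_cross. apply gdet_pos, Hp.
  - rewrite <- gdet_eq_cross. apply sqrt_gdet_neq0, Hp.
Qed.

Lemma Sup_dot_Sv a b s1 s2 t : (a < 2)%nat -> (b < 2)%nat -> U s1 s2 t ->
  dot3 (Sup X a) (Sv X b) s1 s2 t = if Nat.eqb a b then 1 else 0.
Proof.
  intros Ha Hb Hp. pose proof (gdet_neq0 _ _ _ Hp) as H. unfold gdet, gcov, dot3 in H.
  destruct a as [|[|a]], b as [|[|b]]; try lia;
    unfold Sup, sum2, gcon, gdet, gcov, dot3; simpl; field; exact H.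
Qed.

Lemma Nrm_dot_Sv b s1 s2 t : (b < 2)%nat -> U s1 s2 t -> dot3 (Nrm X) (Sv X b) s1 s2 t = 0.
Proof.
  intros Hb Hp. unfold dot3. rewrite !Nrm_eq. pose proof (sqrt_gdet_neq0 _ _ _ Hp).
  destruct b as [|[|b]]; try lia; unfold cross; field; assumption.
Qed.

Lemma Nrm_dot_Nrm s1 s2 t : U s1 s2 t -> dot3 (Nrm X) (Nrm X) s1 s2 t = 1.
Proof.
  intros Hp. pose proof (gdet_neq0 _ _ _ Hp) as H.
  unfold dot3 at 1. rewrite !Nrm_mul_Nrm by assumption.
  rewrite gdet_eq_cross in *. unfold dot3 in *. field. exact H.
Qed.

Lemma Sup_dot_Nrm a s1 s2 t : (a < 2)%nat -> U s1 s2 t -> dot3 (Sup X a) (Nrm X) s1 s2 t = 0.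
Proof.
  intros Ha Hp.
  transitivity (gcon X a 0 s1 s2 t * dot3 (Nrm X) (Sv X 0) s1 s2 t
                + gcon X a 1 s1 s2 t * dot3 (Nrm X) (Sv X 1) s1 s2 t).
  - unfold Sup, sum2, dot3. ring.
  - rewrite !Nrm_dot_Sv by (auto; lia). ring.
Qed.

Lemma gcon_eq_dot_Sup a b s1 s2 t : (a < 2)%nat -> (b < 2)%nat -> U s1 s2 t ->
  gcon X a b s1 s2 t = dot3 (Sup X a) (Sup X b) s1 s2 t.
Proof.
  intros Ha Hb Hp. pose proof (gdet_neq0 _ _ _ Hp) as H. unfold gdet, gcov, dot3 in H.
  destruct a as [|[|a]], b as [|[|b]]; try lia;
    unfold Sup, sum2, gcon, gdet, gcov, dot3; simpl; field; exact H.
Qed.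

Lemma gcon_sym s1 s2 t : gcon X 1 0 s1 s2 t = gcon X 0 1 s1 s2 t.
Proof. unfold gcon, gcov, dot3. simpl. f_equal. f_equal. ring. Qed.

(* Polynomial identities once [N_i N_j] is rewritten as [nS_i nS_j / gdet]. *)
Lemma frame_decomp (w : nat -> field) i s1 s2 t : (i < 3)%nat -> U s1 s2 t ->
  w i s1 s2 t = dot3 (Sup X 0) w s1 s2 t * Sv X 0 i s1 s2 t + dot3 (Sup X 1) w s1 s2 t * Sv X 1 i s1 s2 t
                + dot3 (Nrm X) w s1 s2 t * Nrm X i s1 s2 t.
Proof.
  intros Hi Hp. unfold dot3 at 3. rewrite !Rmult_plus_distr_r, !(Rmult_comm (Nrm X _ _ _ _)), !Rmult_assoc.
  rewrite !Nrm_mul_Nrm by assumption.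
  pose proof (gdet_neq0 _ _ _ Hp) as H. unfold gdet, gcov, dot3 in H.
  destruct i as [|[|[|i]]]; try lia;
    unfold Sup, sum2, gcon, gdet, gcov, dot3, cross; simpl; field; exact H.
Qed.

Lemma dual_frame_decomp (w : nat -> field) i s1 s2 t : (i < 3)%nat -> U s1 s2 t ->
  w i s1 s2 t = dot3 (Sv X 0) w s1 s2 t * Sup X 0 i s1 s2 t + dot3 (Sv X 1) w s1 s2 t * Sup X 1 i s1 s2 t
                + dot3 (Nrm X) w s1 s2 t * Nrm X i s1 s2 t.
Proof.
  intros Hi Hp. unfold dot3 at 3. rewrite !Rmult_plus_distr_r, !(Rmult_comm (Nrm X _ _ _ _)), !Rmult_assoc.
  rewrite !Nrm_mul_Nrm by assumption.
  pose proof (gdet_neq0 _ _ _ Hp) as H. unfold gdet, gcov, dot3 in H.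
  destruct i as [|[|[|i]]]; try lia;
    unfold Sup, sum2, gcon, gdet, gcov, dot3, cross; simpl; field; exact H.
Qed.

Lemma pd_dot3_const u v r k s1 s2 t : U s1 s2 t ->
  (forall a b c, U a b c -> dot3 u v a b c = r) ->
  (forall i, (i < 3)%nat -> ex_pd k (u i) s1 s2 t) -> (forall i, (i < 3)%nat -> ex_pd k (v i) s1 s2 t) ->
  dot3 (fun i => pd k (u i)) v s1 s2 t + dot3 u (fun i => pd k (v i)) s1 s2 t = 0.
Proof. intros Hp Hc Hu Hv. rewrite <- pd_dot3 by assumption. exact (pd_const_on U k _ r _ _ _ HU Hp Hc). Qed.

(* [B_kd] extended to the time index [k = 2]. *)
Definition Bx (k d : nat) : field := dot3 (Nrm X) (fun i => pd k (Sv X d i)).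

Lemma Sv_dot_pd_Nrm d k s1 s2 t : (d < 2)%nat -> U s1 s2 t ->
  dot3 (Sv X d) (fun i => pd k (Nrm X i)) s1 s2 t = - Bx k d s1 s2 t.
Proof.
  intros Hd Hp.
  pose proof (pd_dot3_const (Nrm X) (Sv X d) 0 k s1 s2 t Hp (fun a b c => Nrm_dot_Sv d a b c Hd)
    (fun i _ => ex_pd_Nrm i k s1 s2 t Hp) (fun i Hi => ex_pd_Sv d i k s1 s2 t Hi Hp)) as H.
  unfold Bx, dot3 in *. lra.
Qed.

Lemma Nrm_dot_pd_Nrm k s1 s2 t : U s1 s2 t -> dot3 (Nrm X) (fun i => pd k (Nrm X i)) s1 s2 t = 0.
Proof.
  intros Hp.
  pose proof (pd_dot3_const (Nrm X) (Nrm X) 1 k s1 s2 t Hp (fun a b c => Nrm_dot_Nrm a b c)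
    (fun i _ => ex_pd_Nrm i k s1 s2 t Hp) (fun i _ => ex_pd_Nrm i k s1 s2 t Hp)) as H.
  unfold dot3 in *. lra.
Qed.

Lemma Sv_dot_pd_Sup b d k s1 s2 t : (b < 2)%nat -> (d < 2)%nat -> U s1 s2 t ->
  dot3 (Sv X d) (fun i => pd k (Sup X b i)) s1 s2 t = - Gam X b k d s1 s2 t.
Proof.
  intros Hb Hd Hp.
  pose proof (pd_dot3_const (Sup X b) (Sv X d) _ k s1 s2 t Hp (fun a b' c => Sup_dot_Sv b d a b' c Hb Hd)
    (fun i Hi => ex_pd_Sup b i k s1 s2 t Hb Hi Hp) (fun i Hi => ex_pd_Sv d i k s1 s2 t Hi Hp)) as H.
  unfold Gam, dot3 in *. lra.
Qed.

Lemma Nrm_dot_pd_Sup b k s1 s2 t : (b < 2)%nat -> U s1 s2 t ->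
  dot3 (Nrm X) (fun i => pd k (Sup X b i)) s1 s2 t
  = gcon X b 0 s1 s2 t * Bx k 0 s1 s2 t + gcon X b 1 s1 s2 t * Bx k 1 s1 s2 t.
Proof.
  intros Hb Hp.
  pose proof (pd_dot3_const (Sup X b) (Nrm X) 0 k s1 s2 t Hp (fun a b' c => Sup_dot_Nrm b a b' c Hb)
    (fun i Hi => ex_pd_Sup b i k s1 s2 t Hb Hi Hp) (fun i _ => ex_pd_Nrm i k s1 s2 t Hp)) as H.
  transitivity (- (gcon X b 0 s1 s2 t * dot3 (Sv X 0) (fun i => pd k (Nrm X i)) s1 s2 t
                   + gcon X b 1 s1 s2 t * dot3 (Sv X 1) (fun i => pd k (Nrm X i)) s1 s2 t)).
  - unfold Sup, sum2, dot3 in *. lra.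
  - rewrite !Sv_dot_pd_Nrm by (auto; lia). ring.
Qed.


Lemma pd_Sup b i k s1 s2 t : (b < 2)%nat -> (i < 3)%nat -> U s1 s2 t ->
  pd k (Sup X b i) s1 s2 t =
   - (Gam X b k 0 s1 s2 t * Sup X 0 i s1 s2 t + Gam X b k 1 s1 s2 t * Sup X 1 i s1 s2 t)
   + (gcon X b 0 s1 s2 t * Bx k 0 s1 s2 t + gcon X b 1 s1 s2 t * Bx k 1 s1 s2 t) * Nrm X i s1 s2 t.
Proof.
  intros Hb Hi Hp. rewrite (dual_frame_decomp (fun j => pd k (Sup X b j))) by assumption.
  rewrite !Sv_dot_pd_Sup, Nrm_dot_pd_Sup by (auto; lia). ring.
Qed.

Lemma pd_Nrm i k s1 s2 t : (i < 3)%nat -> U s1 s2 t ->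
  pd k (Nrm X i) s1 s2 t = - (Bx k 0 s1 s2 t * Sup X 0 i s1 s2 t + Bx k 1 s1 s2 t * Sup X 1 i s1 s2 t).
Proof.
  intros Hi Hp. rewrite (dual_frame_decomp (fun j => pd k (Nrm X j))) by assumption.
  rewrite !Sv_dot_pd_Nrm, Nrm_dot_pd_Nrm by (auto; lia). ring.
Qed.

Lemma covS_eq a c i s1 s2 t : (i < 3)%nat -> U s1 s2 t -> covS X a c i s1 s2 t = Bx a c s1 s2 t * Nrm X i s1 s2 t.
Proof.
  intros Hi Hp. unfold covS. rewrite (frame_decomp (fun j => pd a (Sv X c j))) by assumption.
  unfold sum2, Gam, Bx. ring.
Qed.

Lemma Bcov_eq a c s1 s2 t : U s1 s2 t -> Bcov X a c s1 s2 t = Bx a c s1 s2 t.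
Proof.
  intros Hp. transitivity (Bx a c s1 s2 t * dot3 (Nrm X) (Nrm X) s1 s2 t).
  - unfold Bcov, dot3. rewrite !covS_eq by (auto; lia). ring.
  - rewrite Nrm_dot_Nrm by assumption. ring.
Qed.

Lemma pd_Sv_comm a c i s1 s2 t : (a < 3)%nat -> (c < 3)%nat -> (i < 3)%nat -> U s1 s2 t ->
  pd a (Sv X c i) s1 s2 t = pd c (Sv X a i) s1 s2 t.
Proof. intros. unfold Sv. apply (pd_comm U); auto. Qed.

Lemma pd_Vel c i s1 s2 t : (c < 3)%nat -> (i < 3)%nat -> U s1 s2 t ->
  pd c (Vel X i) s1 s2 t = pd 2 (Sv X c i) s1 s2 t.
Proof. intros. unfold Vel, Sv. apply (pd_comm U); auto. Qed.

Lemma Gam_sym b a c s1 s2 t : (a < 3)%nat -> (c < 3)%nat -> U s1 s2 t ->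
  Gam X b a c s1 s2 t = Gam X b c a s1 s2 t.
Proof. intros. unfold Gam, dot3. rewrite !(pd_Sv_comm a c) by (auto; lia). reflexivity. Qed.

Lemma Bx_sym a c s1 s2 t : (a < 3)%nat -> (c < 3)%nat -> U s1 s2 t ->
  Bx a c s1 s2 t = Bx c a s1 s2 t.
Proof. intros. unfold Bx, dot3. rewrite !(pd_Sv_comm a c) by (auto; lia). reflexivity. Qed.

Definition tan3 (b k a c : nat) : field := dot3 (Sup X b) (fun i => pd k (pd a (Sv X c i))).
Definition nrm3 (k a c : nat) : field := dot3 (Nrm X) (fun i => pd k (pd a (Sv X c i))).

Lemma pd_pd_Sv_comm k a c i s1 s2 t : (k < 3)%nat -> (a < 3)%nat -> (i < 3)%nat -> U s1 s2 t ->
  pd k (pd a (Sv X c i)) s1 s2 t = pd a (pd k (Sv X c i)) s1 s2 t.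
Proof. intros. apply (pd_comm U); auto. apply smooth_on_pd, HX. assumption. Qed.

Lemma tan3_sym b k a c s1 s2 t : (k < 3)%nat -> (a < 3)%nat -> U s1 s2 t ->
  tan3 b k a c s1 s2 t = tan3 b a k c s1 s2 t.
Proof. intros. unfold tan3, dot3. rewrite !(pd_pd_Sv_comm k a) by (auto; lia). reflexivity. Qed.

Lemma nrm3_sym12 k a c s1 s2 t : (k < 3)%nat -> (a < 3)%nat -> U s1 s2 t ->
  nrm3 k a c s1 s2 t = nrm3 a k c s1 s2 t.
Proof. intros. unfold nrm3, dot3. rewrite !(pd_pd_Sv_comm k a) by (auto; lia). reflexivity. Qed.

Lemma nrm3_sym23 k a c s1 s2 t : (a < 3)%nat -> (c < 3)%nat -> U s1 s2 t ->
  nrm3 k a c s1 s2 t = nrm3 k c a s1 s2 t.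
Proof.
  intros. unfold nrm3, dot3.
  rewrite !(pd_ext_on U k (pd a (Sv X c _)) (pd c (Sv X a _))) by (auto; intros; apply pd_Sv_comm; auto; lia).
  reflexivity.
Qed.

Lemma ex_pd_Gam b a c k s1 s2 t : (b < 2)%nat -> U s1 s2 t -> ex_pd k (Gam X b a c) s1 s2 t.
Proof. intros. apply ex_pd_dot3; intros; [apply ex_pd_Sup|apply ex_pd_pd_Sv]; auto. Qed.

Lemma ex_pd_Vup b k s1 s2 t : (b < 2)%nat -> U s1 s2 t -> ex_pd k (Vup X b) s1 s2 t.
Proof. intros. apply ex_pd_dot3; intros; [apply ex_pd_Vel|apply ex_pd_Sup]; auto. Qed.

Lemma ex_pd_Cn k s1 s2 t : U s1 s2 t -> ex_pd k (Cn X) s1 s2 t.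
Proof. intros. apply ex_pd_dot3; intros; [apply ex_pd_Vel|apply ex_pd_Nrm]; auto. Qed.

Lemma ex_pd_covS a c i k s1 s2 t : (i < 3)%nat -> U s1 s2 t -> ex_pd k (covS X a c i) s1 s2 t.
Proof.
  intros. apply ex_pd_minus; [apply ex_pd_pd_Sv; auto|].
  apply ex_pd_sum2; apply ex_pd_mult; (apply ex_pd_Gam || apply ex_pd_Sv); auto.
Qed.

Lemma ex_pd_Bcov a c k s1 s2 t : U s1 s2 t -> ex_pd k (Bcov X a c) s1 s2 t.
Proof. intros. apply ex_pd_dot3; intros; [apply ex_pd_Nrm|apply ex_pd_covS]; auto. Qed.

Lemma ex_pd_Bmix b a k s1 s2 t : (b < 2)%nat -> U s1 s2 t -> ex_pd k (Bmix X b a) s1 s2 t.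
Proof.
  intros. apply ex_pd_sum2; apply ex_pd_mult; (apply ex_pd_gcon || apply ex_pd_Bcov); auto; lia.
Qed.

Lemma pd_Gam b k a c s1 s2 t : (b < 2)%nat -> U s1 s2 t ->
  pd k (Gam X b a c) s1 s2 t =
   - (Gam X b k 0 s1 s2 t * Gam X 0 a c s1 s2 t + Gam X b k 1 s1 s2 t * Gam X 1 a c s1 s2 t)
   + (gcon X b 0 s1 s2 t * Bx k 0 s1 s2 t + gcon X b 1 s1 s2 t * Bx k 1 s1 s2 t) * Bx a c s1 s2 t
   + tan3 b k a c s1 s2 t.
Proof.
  intros Hb Hp. unfold Gam at 1.
  rewrite pd_dot3 by (intros; (apply ex_pd_Sup || apply ex_pd_pd_Sv); auto).
  unfold dot3 at 1. rewrite !pd_Sup by (auto; lia). unfold Gam, Bx, tan3, dot3. ring.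
Qed.

Lemma Gdot_eq b c s1 s2 t : (b < 2)%nat -> (c < 2)%nat -> U s1 s2 t ->
  Gdot X b c s1 s2 t = Gam X b 2 c s1 s2 t.
Proof.
  intros Hb Hc Hp. unfold Gdot, nab_v. unfold Vup at 1.
  rewrite pd_dot3 by (intros; (apply ex_pd_Vel || apply ex_pd_Sup); auto).
  unfold dot3. rewrite !pd_Sup, !pd_Vel by (auto; lia).
  unfold Bmix, sum2. rewrite !Bcov_eq, (Bx_sym 0 c), (Bx_sym 1 c) by (auto; lia).
  unfold Cn, Vup, Gam, Bx, dot3. ring.
Qed.

Lemma pd_Cn d s1 s2 t : (d < 3)%nat -> U s1 s2 t ->
  pd d (Cn X) s1 s2 t
  = Bx 2 d s1 s2 t - (Bx d 0 s1 s2 t * Vup X 0 s1 s2 t + Bx d 1 s1 s2 t * Vup X 1 s1 s2 t).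
Proof.
  intros Hd Hp. unfold Cn at 1.
  rewrite pd_dot3 by (intros; (apply ex_pd_Vel || apply ex_pd_Nrm); auto).
  unfold dot3. rewrite !pd_Nrm, !pd_Vel by (auto; lia).
  unfold Vup, Bx, dot3. ring.
Qed.

Lemma pd_covS d a c i s1 s2 t : (i < 3)%nat -> U s1 s2 t ->
  pd d (covS X a c i) s1 s2 t = pd d (pd a (Sv X c i)) s1 s2 t
    - ((pd d (Gam X 0 a c) s1 s2 t * Sv X 0 i s1 s2 t + Gam X 0 a c s1 s2 t * pd d (Sv X 0 i) s1 s2 t)
     + (pd d (Gam X 1 a c) s1 s2 t * Sv X 1 i s1 s2 t + Gam X 1 a c s1 s2 t * pd d (Sv X 1 i) s1 s2 t)).
Proof.
  intros Hi Hp.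
  assert (HGS : forall w, (w < 2)%nat ->
    ex_pd d (fun s1 s2 t => Gam X w a c s1 s2 t * Sv X w i s1 s2 t) s1 s2 t)
    by (intros; apply ex_pd_mult; (apply ex_pd_Gam || apply ex_pd_Sv); auto).
  unfold covS. rewrite pd_minus, pd_sum2 by (try apply ex_pd_sum2; auto using ex_pd_pd_Sv).
  rewrite !pd_mult by ((apply ex_pd_Gam || apply ex_pd_Sv); auto; lia). reflexivity.
Qed.

(* [nabla_a S_c] is normal and [N . N] is constant, so differentiating [N] contributes nothing. *)
Lemma pd_Bcov d a c s1 s2 t : U s1 s2 t ->
  pd d (Bcov X a c) s1 s2 t
  = nrm3 d a c s1 s2 t - (Gam X 0 a c s1 s2 t * Bx d 0 s1 s2 t + Gam X 1 a c s1 s2 t * Bx d 1 s1 s2 t).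
Proof.
  intros Hp. unfold Bcov at 1.
  rewrite pd_dot3 by (intros; (apply ex_pd_Nrm || apply ex_pd_covS); auto).
  transitivity (Bx a c s1 s2 t * dot3 (Nrm X) (fun i => pd d (Nrm X i)) s1 s2 t + nrm3 d a c s1 s2 t
    - (pd d (Gam X 0 a c) s1 s2 t * dot3 (Nrm X) (Sv X 0) s1 s2 t + Gam X 0 a c s1 s2 t * Bx d 0 s1 s2 t
     + pd d (Gam X 1 a c) s1 s2 t * dot3 (Nrm X) (Sv X 1) s1 s2 t + Gam X 1 a c s1 s2 t * Bx d 1 s1 s2 t)).
  - unfold dot3. rewrite !covS_eq, !pd_covS by (auto; lia). unfold nrm3, Bx, dot3. ring.
  - rewrite Nrm_dot_pd_Nrm, !Nrm_dot_Sv by (auto; lia). ring.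
Qed.

Lemma pd_gcon k b d s1 s2 t : (b < 2)%nat -> (d < 2)%nat -> U s1 s2 t ->
  pd k (gcon X b d) s1 s2 t =
    - (Gam X b k 0 s1 s2 t * gcon X 0 d s1 s2 t + Gam X b k 1 s1 s2 t * gcon X 1 d s1 s2 t)
    - (Gam X d k 0 s1 s2 t * gcon X b 0 s1 s2 t + Gam X d k 1 s1 s2 t * gcon X b 1 s1 s2 t).
Proof.
  intros Hb Hd Hp.
  rewrite (pd_ext_on U k (gcon X b d) (dot3 (Sup X b) (Sup X d))) by (auto; intros; apply gcon_eq_dot_Sup; auto).
  rewrite pd_dot3 by (intros; apply ex_pd_Sup; auto).
  transitivity (
    - (Gam X b k 0 s1 s2 t * dot3 (Sup X 0) (Sup X d) s1 s2 t + Gam X b k 1 s1 s2 t * dot3 (Sup X 1) (Sup X d) s1 s2 t)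
    - (Gam X d k 0 s1 s2 t * dot3 (Sup X b) (Sup X 0) s1 s2 t + Gam X d k 1 s1 s2 t * dot3 (Sup X b) (Sup X 1) s1 s2 t)
    + (gcon X b 0 s1 s2 t * Bx k 0 s1 s2 t + gcon X b 1 s1 s2 t * Bx k 1 s1 s2 t) * dot3 (Nrm X) (Sup X d) s1 s2 t
    + (gcon X d 0 s1 s2 t * Bx k 0 s1 s2 t + gcon X d 1 s1 s2 t * Bx k 1 s1 s2 t) * dot3 (Sup X b) (Nrm X) s1 s2 t).
  - unfold dot3 at 1 2. rewrite !pd_Sup by (auto; lia). unfold dot3. ring.
  - assert (Hcomm : dot3 (Nrm X) (Sup X d) s1 s2 t = dot3 (Sup X d) (Nrm X) s1 s2 t) by (unfold dot3; ring).
    rewrite Hcomm, !Sup_dot_Nrm, <- !gcon_eq_dot_Sup by (auto; lia). ring.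
Qed.

Lemma pd_Bmix k b a s1 s2 t : (b < 2)%nat -> U s1 s2 t ->
  pd k (Bmix X b a) s1 s2 t =
    (pd k (gcon X b 0) s1 s2 t * Bcov X 0 a s1 s2 t + gcon X b 0 s1 s2 t * pd k (Bcov X 0 a) s1 s2 t)
  + (pd k (gcon X b 1) s1 s2 t * Bcov X 1 a s1 s2 t + gcon X b 1 s1 s2 t * pd k (Bcov X 1 a) s1 s2 t).
Proof.
  intros Hb Hp. unfold Bmix.
  rewrite pd_sum2 by (apply ex_pd_mult; (apply ex_pd_gcon || apply ex_pd_Bcov); auto; lia).
  rewrite !pd_mult by ((apply ex_pd_gcon || apply ex_pd_Bcov); auto; lia). reflexivity.
Qed.

Lemma pd_Gdot k b c s1 s2 t : (b < 2)%nat -> (c < 2)%nat -> U s1 s2 t ->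
  pd k (Gdot X b c) s1 s2 t = pd k (Gam X b 2 c) s1 s2 t.
Proof. intros. apply (pd_ext_on U); auto. intros; apply Gdot_eq; auto. Qed.

Ltac sort_symmetric_indices := repeat first
  [ rewrite (Gam_sym _ 1 0) by (auto; lia)
  | rewrite (Bx_sym 1 0) by (auto; lia)
  | rewrite (tan3_sym _ 1 0) by (auto; lia)
  | rewrite (tan3_sym _ 2 0) by (auto; lia)
  | rewrite (tan3_sym _ 2 1) by (auto; lia)
  | rewrite (nrm3_sym12 1 0) by (auto; lia)
  | rewrite (nrm3_sym23 _ 1 0) by (auto; lia)
  | rewrite gcon_sym ].

Lemma Rdot_eq a b c s1 s2 t : (a < 2)%nat -> (b < 2)%nat -> (c < 2)%nat -> U s1 s2 t ->
  Rdot X b a c s1 s2 t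
  = Bcov X a c s1 s2 t * nab_up_s X b (Cn X) s1 s2 t - Bmix X b a s1 s2 t * pd c (Cn X) s1 s2 t.
Proof.
  intros Ha Hb Hc Hp.
  unfold Rdot, nab_mix, Riem, nab_up_s, Bmix, sum2.
  rewrite pd_Gdot, !pd_Gam, !Gdot_eq, !pd_Cn, !Bcov_eq by (auto; lia).
  destruct a as [|[|a]], b as [|[|b]], c as [|[|c]]; try lia; sort_symmetric_indices; ring.
Qed.

(* The Codazzi equation [nabla^b B_ac = nabla_c B^b_a] is hidden in the symmetry of [nrm3]. *)
Lemma nab_CB_diff_eq a b c s1 s2 t : (a < 2)%nat -> (b < 2)%nat -> (c < 2)%nat -> U s1 s2 t ->
  nab_up_cov2 X b (fun a' c' s1 s2 t => Cn X s1 s2 t * Bcov X a' c' s1 s2 t) a c s1 s2 t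
  - nab_mix X c (fun b' a' s1 s2 t => Cn X s1 s2 t * Bmix X b' a' s1 s2 t) b a s1 s2 t
  = Bcov X a c s1 s2 t * nab_up_s X b (Cn X) s1 s2 t - Bmix X b a s1 s2 t * pd c (Cn X) s1 s2 t.
Proof.
  intros Ha Hb Hc Hp.
  unfold nab_up_cov2, nab_cov2, nab_mix, nab_up_s, sum2.
  rewrite !pd_mult by (first [apply ex_pd_Cn | apply ex_pd_Bcov | apply ex_pd_Bmix]; auto).
  rewrite !pd_Bmix, !pd_Bcov, !pd_gcon, !pd_Cn by (auto; lia).
  unfold Bmix, sum2. rewrite !Bcov_eq by assumption.
  destruct a as [|[|a]], b as [|[|b]], c as [|[|c]]; try lia; sort_symmetric_indices; ring.
Qed.

Lemma ex_pd_Gdot b g k s1 s2 t : (b < 2)%nat -> (g < 2)%nat -> U s1 s2 t -> ex_pd k (Gdot X b g) s1 s2 t.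
Proof.
  intros. apply (ex_pd_ext_on U k (Gam X b 2 g)); auto using ex_pd_Gam.
  intros; symmetry; apply Gdot_eq; auto.
Qed.

Lemma pd_Gam_sym k b s1 s2 t : U s1 s2 t -> pd k (Gam X b 1 0) s1 s2 t = pd k (Gam X b 0 1) s1 s2 t.
Proof. intros. apply (pd_ext_on U); auto. intros; apply Gam_sym; auto. Qed.

Section Commutator.
Variable psi : nat -> field.
Hypothesis Hpsi : forall b, (b < 2)%nat -> smooth_on U (psi b).

Lemma ex_pd_psi b k s1 s2 t : (b < 2)%nat -> U s1 s2 t -> ex_pd k (psi b) s1 s2 t.
Proof. intros. apply (smooth_ex_pd U (psi b) nil); auto. Qed.

Lemma ex_pd_pd_psi a b k s1 s2 t : (b < 2)%nat -> U s1 s2 t -> ex_pd k (pd a (psi b)) s1 s2 t.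
Proof. intros. apply (smooth_ex_pd U (psi b) (a :: nil)); auto. Qed.

Lemma ex_pd_nab_v g b k s1 s2 t : (b < 2)%nat -> U s1 s2 t -> ex_pd k (nab_v X g psi b) s1 s2 t.
Proof.
  intros. apply ex_pd_plus; [apply ex_pd_pd_psi; auto|].
  apply ex_pd_sum2; apply ex_pd_mult; (apply ex_pd_Gam || apply ex_pd_psi); auto; lia.
Qed.

Lemma pd_nab_v k a b s1 s2 t : (b < 2)%nat -> U s1 s2 t ->
  pd k (nab_v X a psi b) s1 s2 t = pd k (pd a (psi b)) s1 s2 t
   + ((pd k (Gam X b a 0) s1 s2 t * psi 0%nat s1 s2 t + Gam X b a 0 s1 s2 t * pd k (psi 0%nat) s1 s2 t)
    + (pd k (Gam X b a 1) s1 s2 t * psi 1%nat s1 s2 t + Gam X b a 1 s1 s2 t * pd k (psi 1%nat) s1 s2 t)).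
Proof.
  intros Hb Hp.
  assert (HGpsi : forall d, (d < 2)%nat ->
    ex_pd k (fun s1 s2 t => Gam X b a d s1 s2 t * psi d s1 s2 t) s1 s2 t)
    by (intros; apply ex_pd_mult; (apply ex_pd_Gam || apply ex_pd_psi); auto).
  unfold nab_v. rewrite pd_plus, pd_sum2 by (try apply ex_pd_sum2; auto using ex_pd_pd_psi).
  rewrite !pd_mult by ((apply ex_pd_Gam || apply ex_pd_psi); auto; lia). reflexivity.
Qed.

Lemma pd_tdv k b s1 s2 t : (b < 2)%nat -> U s1 s2 t ->
  pd k (tdv X psi b) s1 s2 t = pd k (pd 2 (psi b)) s1 s2 t
   - ((pd k (Vup X 0) s1 s2 t * nab_v X 0 psi b s1 s2 t + Vup X 0 s1 s2 t * pd k (nab_v X 0 psi b) s1 s2 t)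
    + (pd k (Vup X 1) s1 s2 t * nab_v X 1 psi b s1 s2 t + Vup X 1 s1 s2 t * pd k (nab_v X 1 psi b) s1 s2 t))
   + ((pd k (Gdot X b 0) s1 s2 t * psi 0%nat s1 s2 t + Gdot X b 0 s1 s2 t * pd k (psi 0%nat) s1 s2 t)
    + (pd k (Gdot X b 1) s1 s2 t * psi 1%nat s1 s2 t + Gdot X b 1 s1 s2 t * pd k (psi 1%nat) s1 s2 t)).
Proof.
  intros Hb Hp.
  assert (HVnab : forall g, (g < 2)%nat ->
    ex_pd k (fun s1 s2 t => Vup X g s1 s2 t * nab_v X g psi b s1 s2 t) s1 s2 t)
    by (intros; apply ex_pd_mult; (apply ex_pd_Vup || apply ex_pd_nab_v); auto).
  assert (HGpsi : forall g, (g < 2)%nat ->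
    ex_pd k (fun s1 s2 t => Gdot X b g s1 s2 t * psi g s1 s2 t) s1 s2 t)
    by (intros; apply ex_pd_mult; (apply ex_pd_Gdot || apply ex_pd_psi); auto).
  unfold tdv. rewrite pd_plus, pd_minus, !pd_sum2
    by (try apply ex_pd_minus; try apply ex_pd_sum2; auto using ex_pd_pd_psi).
  rewrite !pd_mult
    by ((apply ex_pd_Vup || apply ex_pd_nab_v || apply ex_pd_Gdot || apply ex_pd_psi); auto; lia).
  reflexivity.
Qed.

Lemma commutator_eq_Rdot a b s1 s2 t : (a < 2)%nat -> (b < 2)%nat -> U s1 s2 t ->
  tdmix X (fun b' a' => nab_v X a' psi b') b a s1 s2 t
  - nab_v X a (tdv X psi) b s1 s2 t
  - sum2 (fun g s1 s2 t => Cn X s1 s2 t * Bmix X g a s1 s2 t * nab_v X g psi b s1 s2 t) s1 s2 t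
  = Rdot X b a 0 s1 s2 t * psi 0%nat s1 s2 t + Rdot X b a 1 s1 s2 t * psi 1%nat s1 s2 t.
Proof.
  intros Ha Hb Hp.
  unfold tdmix, nab_mix, sum2. rewrite !pd_nab_v by (auto; lia).
  unfold nab_v, sum2. rewrite !pd_tdv, !pd_nab_v by (auto; lia).
  unfold Rdot, Riem, nab_mix, tdv, Gdot, nab_v, sum2.
  destruct a as [|[|a]], b as [|[|b]]; try lia;
    repeat first
      [ rewrite (Gam_sym _ 1 0) by (auto; lia)
      | rewrite (pd_Gam_sym _ _) by assumption
      | rewrite (pd_comm U (psi _) 1 0) by (auto; lia)
      | rewrite (pd_comm U (psi _) 2 0) by (auto; lia)
      | rewrite (pd_comm U (psi _) 2 1) by (auto; lia) ];
    ring.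
Qed.

End Commutator.
End Frame.

Theorem mainTheorem6 (U : R -> R -> R -> Prop) (X : nat -> field) :
  open3 U ->
  (forall i, (i < 3)%nat -> smooth_on U (X i)) ->
  (forall s1 s2 t, U s1 s2 t ->
     dot3 (cross (Sv X 0) (Sv X 1)) (cross (Sv X 0) (Sv X 1)) s1 s2 t <> 0) ->
  (forall s1 s2 t, U s1 s2 t -> forall a b c : nat, (a < 2)%nat -> (b < 2)%nat -> (c < 2)%nat ->
     Rdot X b a c s1 s2 t
       = nab_up_cov2 X b (fun a' c' s1 s2 t => Cn X s1 s2 t * Bcov X a' c' s1 s2 t) a c s1 s2 t
         - nab_mix X c (fun b' a' s1 s2 t => Cn X s1 s2 t * Bmix X b' a' s1 s2 t) b a s1 s2 t
     /\
     Rdot X b a c s1 s2 t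
       = Bcov X a c s1 s2 t * nab_up_s X b (Cn X) s1 s2 t
         - Bmix X b a s1 s2 t * pd c (Cn X) s1 s2 t)
  /\
  (forall psi : nat -> field, (forall b, (b < 2)%nat -> smooth_on U (psi b)) ->
   forall s1 s2 t, U s1 s2 t -> forall a b : nat, (a < 2)%nat -> (b < 2)%nat ->
     tdmix X (fun b' a' => nab_v X a' psi b') b a s1 s2 t
     - nab_v X a (tdv X psi) b s1 s2 t
     - sum2 (fun g s1 s2 t => Cn X s1 s2 t * Bmix X g a s1 s2 t * nab_v X g psi b s1 s2 t) s1 s2 t
     = sum2 (fun g s1 s2 t =>
          (Bcov X a g s1 s2 t * nab_up_s X b (Cn X) s1 s2 t
           - Bmix X b a s1 s2 t * pd g (Cn X) s1 s2 t) * psi g s1 s2 t) s1 s2 t).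
Proof.
  intros HU HX Hnd. split.
  - intros s1 s2 t Hp a b c Ha Hb Hc.
    rewrite (Rdot_eq U X HU HX Hnd) by assumption.
    split; [symmetry; apply (nab_CB_diff_eq U X HU HX Hnd)|]; auto.
  - intros psi Hpsi s1 s2 t Hp a b Ha Hb.
    rewrite (commutator_eq_Rdot U X HU HX Hnd psi Hpsi) by assumption.
    unfold sum2. rewrite !(Rdot_eq U X HU HX Hnd) by (auto; lia). reflexivity.
Qed.
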